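(* Let $q$ be a prime power, and let $d$ and $k$ be positive divisors of $q-1$ such that $d\nmid k$. Then there are at most $d$ elements $a\in\mathbb F_q^*$ for which the polynomial $x^{k+1}+ax$ maps all elements of $\mu_d$ into the same coset of $\mathbb F_q^*$ modulo $\mu_d$.
   Context: $\mathbb F_q$ is the field with $q$ elements, $\mathbb F_q^*$ its multiplicative group. For a divisor $d$ of $q-1$, $\mu_d$ denotes the group of $d$-th roots of unity in $\mathbb F_q^*$. *)

From HB Require Import structures.
From mathcomp Require Import all_boot all_order all_algebra all_field.
Set Implicit Arguments. Unset Strict Implicit. Unset Printing Implicit Defensive.
Import GRing.Theory.
Local Open Scope ring_scope.

Definition mu (F : finFieldType) (d : nat) : {set F} :=
  [set x : F | x ^+ d == 1].

Definition mu_coset (F : finFieldType) (d : nat) (c : F) : {set F} :=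
  [set c * z | z in mu F d].

Definition maps_into_one_coset (F : finFieldType) (d k : nat) (a : F) : bool :=
  [exists c : F, (c != 0) &&
     [forall x in mu F d, x ^+ k.+1 + a * x \in mu_coset d c]].

From mathcomp Require Import all_boot all_order all_algebra all_field cyclic.
Set Implicit Arguments.
Unset Strict Implicit.
Unset Printing Implicit Defensive.
Local Open Scope ring_scope.
Import GRing.Theory.

(* If [x^(k+1) + a x] maps mu_d into [c mu_d], then [(x^k + a)^d = c^d] for
   every [x] in mu_d, since [x^d = 1] there.  Comparing [x = 1] with a
   primitive d-th root [x = w] shows that [a] is a root of
   [(X + 1)^d - (X + w^k)^d], a polynomial of degree at most d which is
   nonzero because [w^k <> 1] when d does not divide k. *)

Lemma finField_prim_root_exists (F : finFieldType) (n : nat) :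
  (n %| #|F|.-1)%N -> exists z : F, n.-primitive_root z.
Proof.
move=> n_dvd; pose units := enum [set~ (0 : F)].
have size_units : size units = #|F|.-1 by rewrite -cardE cardsC1.
have units1 x : x \in units -> x ^+ #|F|.-1 = 1.
  rewrite mem_enum in_setC1 => x_neq0; apply: (mulIf x_neq0).
  by rewrite mul1r -exprSr prednK ?expf_card //; apply/card_gt0P; exists 0.
have /hasP[g _ prim_g] : has #|F|.-1.-primitive_root units.
  apply: has_prim_root; rewrite ?size_units ?enum_uniq //.
    by rewrite -subn1 subn_gt0 finNzRing_gt1.
  by apply/allP => x /units1 x1; rewrite unity_rootE x1.
by exists (g ^+ (#|F|.-1 %/ n)); apply: dvdn_prim_root.
Qed.

Definition shift_exp_diff (R : nzRingType) (d : nat) (z : R) : {poly R} :=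
  ('X + 1%:P) ^+ d - ('X + z%:P) ^+ d.

Lemma size_shift_exp_diff (R : nzRingType) (d : nat) (z : R) :
  (size (shift_exp_diff d z) <= d.+1)%N.
Proof.
have size_exp_XaddC (c : R) : size (('X + c%:P) ^+ d) = d.+1.
  by rewrite -(opprK c) polyCN size_exp_XsubC.
by rewrite (leq_trans (size_polyD _ _)) // size_polyN !size_exp_XaddC maxnn.
Qed.

Lemma root_shift_exp_diff (R : comNzRingType) (d : nat) (z a : R) :
  root (shift_exp_diff d z) a = ((a + 1) ^+ d == (a + z) ^+ d).
Proof. by rewrite rootE !hornerE subr_eq0. Qed.

Lemma shift_exp_diff_neq0 (R : idomainType) (d : nat) (z : R) :
  (0 < d)%N -> z != 1 -> shift_exp_diff d z != 0.
Proof.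
move=> d_gt0 z_neq1; apply: contraNneq z_neq1 => P0.
have : root (shift_exp_diff d z) (-1) by rewrite P0 root0.
rewrite root_shift_exp_diff addNr expr0n eqn0Ngt d_gt0 eq_sym expf_eq0 d_gt0.
by rewrite addrC subr_eq0.
Qed.

Lemma card_roots_lt_size (R : finIdomainType) (p : {poly R}) (A : {set R}) :
  p != 0 -> (forall x, x \in A -> root p x) -> (#|A| < size p)%N.
Proof.
move=> p_neq0 A_roots; rewrite cardE max_poly_roots ?enum_uniq //.
by apply/allP => x; rewrite mem_enum => /A_roots.
Qed.

Lemma maps_into_one_coset_exp_eq (F : finFieldType) (d k : nat) (a x y : F) :
  maps_into_one_coset d k a -> x ^+ d = 1 -> y ^+ d = 1 ->
  (x ^+ k + a) ^+ d = (y ^+ k + a) ^+ d.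
Proof.
case/existsP => c /andP[_ /forallP into_coset].
suff exp_c t : t ^+ d = 1 -> (t ^+ k + a) ^+ d = c ^+ d.
  by move=> /exp_c -> /exp_c ->.
move=> t1; have /(implyP (into_coset t)) : t \in mu F d by rewrite inE t1.
case/imsetP => u; rewrite inE => /eqP u1 /(congr1 (fun s => s ^+ d)).
by rewrite exprSr -mulrDl !exprMn t1 u1 !mulr1.
Qed.

Theorem proposition4p6 (F : finFieldType) (d k : nat)
  (hd : (0 < d)%N) (hk : (0 < k)%N)
  (hdq : (d %| #|F|.-1)%N) (hkq : (k %| #|F|.-1)%N) (hndk : ~~ (d %| k)%N) :
  (#|[set a : F | (a != 0%R) && maps_into_one_coset d k a]| <= d)%N.
Proof.
have [w prim_w] := finField_prim_root_exists hdq.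
have wk_neq1 : w ^+ k != 1 by rewrite -(prim_order_dvd prim_w).
rewrite -ltnS (leq_trans _ (size_shift_exp_diff d (w ^+ k))) //.
apply: card_roots_lt_size; first exact: shift_exp_diff_neq0.
move=> a; rewrite inE => /andP[_ one_coset].
rewrite root_shift_exp_diff addrC [a + _]addrC -{1}(expr1n F k).
by rewrite (maps_into_one_coset_exp_eq one_coset (expr1n F d) (prim_expr_order prim_w)).
Qed.
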